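(* Let $\Lambda=\{\Lambda_j\}_{j=1}^\infty$ and $\Omega=\{\Omega_j\}_{j=1}^\infty$ be $(C,C')$-controlled $K$-$g$-frames for $\mathcal H$ with respect to $\{\mathcal H_j\}_{j=1}^\infty$ and $\{\mathcal W_j\}_{j=1}^\infty$, respectively. For each $j\in\mathbb N$ let $\{f_{jk}\}_{k\in I_j}$ ($I_j\subseteq\mathbb N$) be a frame for $\mathcal H_j$ with frame bounds $\alpha,\beta$ and $\{g_{jk}\}_{k\in Q_j}$ ($Q_j\subseteq\mathbb N$) a frame for $\mathcal W_j$ with frame bounds $\alpha',\beta'$ (the bounds independent of $j$). Then the following are equivalent: (i) $\Lambda$ and $\Omega$ are $(C,C')$-controlled $K$-$g$-woven; (ii) $\{(CC')^{1/2}\Lambda_j^*f_{jk}\}_{j\in\mathbb N,k\in I_j}$ and $\{(CC')^{1/2}\Omega_j^*g_{jk}\}_{j\in\mathbb N,k\in Q_j}$ are woven $K$-frames for $\mathcal H$, i.e. there are universal constants $0<D_1\le D_2<\infty$ such that for every $\sigma\subseteq\mathbb N$ and all $f\in\mathcal H$, $$D_1\|K^*f\|^2\le\sum_{j\in\sigma}\sum_{k\in I_j}|\langle f,(CC')^{1/2}\Lambda_j^*f_{jk}\rangle|^2+\sum_{j\in\sigma^c}\sum_{k\in Q_j}|\langle f,(CC')^{1/2}\Omega_j^*g_{jk}\rangle|^2\le D_2\|f\|^2.$$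
   Context: $\mathcal H$ is a complex separable Hilbert space, $K\in\mathcal L(\mathcal H)$, $C,C'\in\mathcal{GL}^+(\mathcal H)$ (bounded positive operators with bounded inverse); $\{\mathcal H_j\}$, $\{\mathcal W_j\}$ are sequences of closed subspaces of Hilbert spaces $\mathcal K_1,\mathcal K_2$; $\Lambda_j\in\mathcal L(\mathcal H,\mathcal H_j)$, $\Omega_j\in\mathcal L(\mathcal H,\mathcal W_j)$. Standing assumption: $C$ and $C'$ commute with each other and with every $\Lambda_j^*\Lambda_j$ and $\Omega_j^*\Omega_j$, so $(CC')^{1/2}$ exists and $\langle\Lambda_jCf,\Lambda_jC'f\rangle=\|\Lambda_j(CC')^{1/2}f\|^2$ (similarly for $\Omega_j$). A family $\{\Gamma_j\}$ is a $(C,C')$-controlled $K$-$g$-frame if there are $0<A\le B$ with $A\|K^*f\|^2\le\sum_j\langle\Gamma_jCf,\Gamma_jC'f\rangle\le B\|f\|^2$ for all $f$. $\Lambda,\Omega$ are $(C,C')$-controlled $K$-$g$-woven if there are universal $0<A\le B$ such that for every $\sigma\subseteq\mathbb N$ the family $\{\Lambda_j\}_{j\in\sigma}\cup\{\Omega_j\}_{j\in\sigma^c}$ is a $(C,C')$-controlled $K$-$g$-frame with bounds $A,B$. A sequence $\{h_k\}$ in a Hilbert space $V$ is a frame with bounds $a,b>0$ if $a\|v\|^2\le\sum_k|\langle v,h_k\rangle|^2\le b\|v\|^2$ for all $v\in V$. *)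

From Stdlib Require Import Reals.
Open Scope R_scope.

Record Cplx := mkC { Re : R ; Im : R }.
Definition C0 : Cplx := mkC 0 0.
Definition C1 : Cplx := mkC 1 0.
Definition Cadd (a b : Cplx) : Cplx := mkC (Re a + Re b) (Im a + Im b).
Definition Cmul (a b : Cplx) : Cplx :=
  mkC (Re a * Re b - Im a * Im b) (Re a * Im b + Im a * Re b).
Definition Cconj (a : Cplx) : Cplx := mkC (Re a) (- Im a).
Definition Cnorm2 (a : Cplx) : R := Re a * Re a + Im a * Im a.

Record Hilbert := {
  carrier :> Type;
  hzero : carrier;
  hadd : carrier -> carrier -> carrier;
  hopp : carrier -> carrier;
  hscal : Cplx -> carrier -> carrier;
  hinner : carrier -> carrier -> Cplx;
  hadd_assoc : forall x y z, hadd x (hadd y z) = hadd (hadd x y) z;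
  hadd_comm : forall x y, hadd x y = hadd y x;
  hadd_0 : forall x, hadd x hzero = x;
  hadd_opp : forall x, hadd x (hopp x) = hzero;
  hscal_1 : forall x, hscal C1 x = x;
  hscal_assoc : forall a b x, hscal a (hscal b x) = hscal (Cmul a b) x;
  hscal_distr_v : forall a x y, hscal a (hadd x y) = hadd (hscal a x) (hscal a y);
  hscal_distr_s : forall a b x, hscal (Cadd a b) x = hadd (hscal a x) (hscal b x);
  hinner_conj : forall x y, hinner x y = Cconj (hinner y x);
  hinner_add_l : forall x y z, hinner (hadd x y) z = Cadd (hinner x z) (hinner y z);
  hinner_scal_l : forall a x y, hinner (hscal a x) y = Cmul a (hinner x y);
  hinner_pos : forall x, 0 <= Re (hinner x x);
  hinner_def : forall x, Re (hinner x x) = 0 -> x = hzero;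
  hcomplete : forall u : nat -> carrier,
    (forall eps, eps > 0 -> exists N, forall m n, (m >= N)%nat -> (n >= N)%nat ->
       Re (hinner (hadd (u m) (hopp (u n))) (hadd (u m) (hopp (u n)))) < eps) ->
    exists l, forall eps, eps > 0 -> exists N, forall n, (n >= N)%nat ->
       Re (hinner (hadd (u n) (hopp l)) (hadd (u n) (hopp l))) < eps;
  hseparable : exists d : nat -> carrier, forall x eps, eps > 0 ->
    exists n, Re (hinner (hadd x (hopp (d n))) (hadd x (hopp (d n)))) < eps
}.
Arguments hzero {h}.
Arguments hadd {h}.
Arguments hopp {h}.
Arguments hscal {h}.
Arguments hinner {h}.

Definition norm2 {H : Hilbert} (x : H) : R := Re (hinner x x).

Record BOp (H H' : Hilbert) := {
  op :> H -> H';
  op_add : forall x y, op (hadd x y) = hadd (op x) (op y);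
  op_scal : forall a x, op (hscal a x) = hscal a (op x);
  op_bounded : exists M, forall x, norm2 (op x) <= M * norm2 x
}.
Arguments op {H H'}.

Definition is_adjoint {H H' : Hilbert} (T : BOp H H') (T' : BOp H' H) : Prop :=
  forall x y, hinner (T x) y = hinner x (T' y).

Definition positive_op {H : Hilbert} (T : BOp H H) : Prop :=
  forall x, Im (hinner (T x) x) = 0 /\ 0 <= Re (hinner (T x) x).

Definition GLplus {H : Hilbert} (T : BOp H H) : Prop :=
  positive_op T /\
  exists Ti : BOp H H, (forall x, T (Ti x) = x) /\ (forall x, Ti (T x) = x).

Definition sum_in (P : nat -> bool) (a : nat -> R) : nat -> R :=
  fun k => if P k then a k else 0.

Definition series_between (a : nat -> R) (lo hi : R) : Prop :=
  exists l, infinite_sum a l /\ lo <= l /\ l <= hi.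

Definition is_frame {V : Hilbert} (h : nat -> V) (I : nat -> bool) (a b : R) : Prop :=
  0 < a /\ 0 < b /\
  forall v : V, series_between (sum_in I (fun k => Cnorm2 (hinner v (h k))))
                               (a * norm2 v) (b * norm2 v).

Definition weave {H : Hilbert} {HL HO : nat -> Hilbert}
  (Lam : forall j, BOp H (HL j)) (Om : forall j, BOp H (HO j))
  (C C' : BOp H H) (sigma : nat -> bool) (f : H) : nat -> R :=
  fun j => if sigma j then Re (hinner (Lam j (C f)) (Lam j (C' f)))
           else Re (hinner (Om j (C f)) (Om j (C' f))).

Definition ctrl_Kg_frame_bounds {H : Hilbert} {Hj : nat -> Hilbert}
  (Kadj : BOp H H) (C C' : BOp H H) (Gam : forall j, BOp H (Hj j)) (A B : R) : Prop :=
  0 < A /\ A <= B /\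
  forall f : H, series_between (fun j => Re (hinner (Gam j (C f)) (Gam j (C' f))))
                               (A * norm2 (Kadj f)) (B * norm2 f).

Definition ctrl_Kg_frame {H : Hilbert} {Hj : nat -> Hilbert}
  (Kadj : BOp H H) (C C' : BOp H H) (Gam : forall j, BOp H (Hj j)) : Prop :=
  exists A B, ctrl_Kg_frame_bounds Kadj C C' Gam A B.

Definition ctrl_Kg_woven {H : Hilbert} {HL HO : nat -> Hilbert}
  (Kadj : BOp H H) (C C' : BOp H H)
  (Lam : forall j, BOp H (HL j)) (Om : forall j, BOp H (HO j)) : Prop :=
  exists A B, 0 < A /\ A <= B /\
    forall (sigma : nat -> bool) (f : H),
      series_between (weave Lam Om C C' sigma f) (A * norm2 (Kadj f)) (B * norm2 f).

Definition woven_K_frames {H : Hilbert} {HL HO : nat -> Hilbert}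
  (Kadj : BOp H H) (S : BOp H H)
  (Lamadj : forall j, BOp (HL j) H) (Omadj : forall j, BOp (HO j) H)
  (fr : forall j, nat -> HL j) (I : nat -> nat -> bool)
  (gr : forall j, nat -> HO j) (Q : nat -> nat -> bool) : Prop :=
  exists D1 D2, 0 < D1 /\ D1 <= D2 /\
    forall (sigma : nat -> bool) (f : H),
      exists inner_sums : nat -> R,
        (forall j, infinite_sum
           (if sigma j
            then sum_in (I j) (fun k => Cnorm2 (hinner f (S (Lamadj j (fr j k)))))
            else sum_in (Q j) (fun k => Cnorm2 (hinner f (S (Omadj j (gr j k))))))
           (inner_sums j)) /\
        series_between inner_sums (D1 * norm2 (Kadj f)) (D2 * norm2 f).

(* Write w_j for the j-th term of the woven controlled series,
   w_j = <Gam_j C f, Gam_j C' f> = ||Gam_j S f||^2 with S = (CC')^{1/2} and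
   Gam = Lam on sigma, Om on its complement.  Since S is positive it is
   self-adjoint, so <f, S Gam_j^* h_jk> = <Gam_j S f, h_jk>; hence the inner
   series over k in the woven K-frame condition is the frame series of the
   local frame {h_jk}_k at the vector Gam_j S f.  With the uniform bounds
   m = min(alpha, alpha') and M >= beta, beta', every inner series therefore
   sums to a value t_j with  m w_j <= t_j <= M w_j. *)
From Stdlib Require Import Reals.
Open Scope R_scope.
From Stdlib Require Import Lra FunctionalExtensionality IndefiniteDescription.

Lemma infinite_sum_scal (c L : R) (b : nat -> R) :
  infinite_sum b L -> infinite_sum (fun i => c * b i) (c * L).
Proof.
  intros hb.
  assert (hc : Un_cv (fun _ : nat => c) c).
  { intros e he; exists 0%nat; intros.
    unfold Rdist; rewrite Rminus_diag, Rabs_R0; lra. }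
  intros e he; destruct (CV_mult _ _ _ _ hc hb e he) as [N HN].
  exists N; intros n hn.
  replace (sum_f_R0 (fun i => c * b i) n) with (c * sum_f_R0 b n).
  - exact (HN n hn).
  - rewrite scal_sum; apply sum_eq; intros; ring.
Qed.

Lemma series_between_widen (a : nat -> R) (lo hi lo' hi' : R) :
  lo' <= lo -> hi <= hi' -> series_between a lo hi -> series_between a lo' hi'.
Proof. intros h1 h2 [l [hl [h3 h4]]]; exists l; repeat split; auto; lra. Qed.

Lemma series_between_compare (a b : nat -> R) (d c lo hi : R) :
  0 <= d -> 0 <= c -> (forall n, 0 <= b n) ->
  (forall n, d * b n <= a n <= c * b n) ->
  series_between b lo hi -> series_between a (d * lo) (c * hi).
Proof.
  intros hd hc hb hab [L [hL [hlo hhi]]].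
  pose proof (infinite_sum_scal c L b hL) as hcL.
  pose proof (infinite_sum_scal d L b hL) as hdL.
  destruct (Rseries_CV_comp a (fun i => c * b i)) as [l hl].
  { intro n; specialize (hab n); specialize (hb n); split; nra. }
  { exists (c * L); exact hcL. }
  exists l; split; [exact hl | split].
  - apply Rle_trans with (d * L); [apply Rmult_le_compat_l; lra |].
    apply (Rle_cv_lim (fun n => sum_Rle _ _ n (fun i _ => proj1 (hab i))) hdL hl).
  - apply Rle_trans with (c * L); [| apply Rmult_le_compat_l; lra].
    apply (Rle_cv_lim (fun n => sum_Rle _ _ n (fun i _ => proj2 (hab i))) hl hcL).
Qed.

Section DoubleSeries.

Variables (w : nat -> R) (s : nat -> nat -> R) (m M : R).
Hypothesis m_pos : 0 < m.
Hypothesis M_pos : 0 < M.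
Hypothesis w_nonneg : forall j, 0 <= w j.
Hypothesis s_local : forall j, series_between (s j) (m * w j) (M * w j).

Lemma inner_sums_exist :
  exists t : nat -> R, forall j, infinite_sum (s j) (t j) /\ m * w j <= t j <= M * w j.
Proof.
  apply (functional_choice (fun j l => infinite_sum (s j) l /\ m * w j <= l <= M * w j)); intro j.
  destruct (s_local j) as [l [hl hb]]; exists l; auto.
Qed.

Lemma outer_bounds_of_terms (lo hi : R) :
  series_between w lo hi ->
  exists t : nat -> R, (forall j, infinite_sum (s j) (t j)) /\
                       series_between t (m * lo) (M * hi).
Proof.
  intros hw; destruct inner_sums_exist as [t ht]; exists t; split.
  - intro j; exact (proj1 (ht j)).
  - apply (series_between_compare t w); auto; try lra.
    intro j; exact (proj2 (ht j)).
Qed.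

Lemma terms_bounds_of_outer (t : nat -> R) (lo hi : R) :
  (forall j, infinite_sum (s j) (t j)) -> series_between t lo hi ->
  series_between w (/ M * lo) (/ m * hi).
Proof.
  intros ht hb; destruct inner_sums_exist as [t' ht'].
  assert (t_eq : forall j, t j = t' j)
    by (intro j; exact (uniqueness_sum _ _ _ (ht j) (proj1 (ht' j)))).
  apply (series_between_compare w t); auto.
  - apply Rlt_le, Rinv_0_lt_compat; lra.
  - apply Rlt_le, Rinv_0_lt_compat; lra.
  - intro j; rewrite t_eq; specialize (ht' j); specialize (w_nonneg j); nra.
  - intro j; rewrite t_eq; destruct (ht' j) as [_ [h1 h2]]; split.
    + apply (Rmult_le_reg_l M); [lra |]; rewrite <- Rmult_assoc, Rinv_r; lra.
    + apply (Rmult_le_reg_l m); [lra |]; rewrite <- Rmult_assoc, Rinv_r; lra.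
Qed.

End DoubleSeries.

Lemma Cplx_ext (a b : Cplx) : Re a = Re b -> Im a = Im b -> a = b.
Proof. destruct a, b; simpl; intros; subst; reflexivity. Qed.

Lemma hinner_add_r {H : Hilbert} (x y z : H) :
  hinner x (hadd y z) = Cadd (hinner x y) (hinner x z).
Proof.
  rewrite (hinner_conj _ x (hadd y z)), hinner_add_l,
    (hinner_conj _ x y), (hinner_conj _ x z).
  apply Cplx_ext; simpl; ring.
Qed.

Lemma hinner_scal_r {H : Hilbert} (a : Cplx) (x y : H) :
  hinner x (hscal a y) = Cmul (Cconj a) (hinner x y).
Proof.
  rewrite (hinner_conj _ x (hscal a y)), hinner_scal_l, (hinner_conj _ x y).
  apply Cplx_ext; simpl; ring.
Qed.

(* On a complex Hilbert space a positive operator is self-adjoint: polarize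
   the real quadratic form <S x, x> along x + y and x + i y. *)
Lemma positive_op_selfadjoint {H : Hilbert} (S : BOp H H) :
  positive_op S -> forall x y, hinner (S x) y = hinner x (S y).
Proof.
  intros hS x y.
  set (i := mkC 0 1).
  assert (E1 := proj1 (hS (hadd x y))).
  assert (E2 := proj1 (hS (hadd x (hscal i y)))).
  assert (Ex := proj1 (hS x)). assert (Ey := proj1 (hS y)).
  assert (Eiy := proj1 (hS (hscal i y))).
  rewrite op_add, hinner_add_l, !hinner_add_r in E1, E2.
  rewrite op_scal in E2, Eiy.
  rewrite !hinner_scal_l, !hinner_scal_r in E2, Eiy.
  simpl in E1, E2, Ex, Ey, Eiy.
  rewrite (hinner_conj _ x (S y)).
  assert (Eiy0 : Im (hinner (hscal i (S y)) (hscal i y)) = 0)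
    by (rewrite <- op_scal; exact (proj1 (hS _))).
  apply Cplx_ext; simpl; lra.
Qed.

(* Pulling a local frame back along T S: the frame coefficients of the vectors
   S T^* h_k at f are those of h_k at T S f, so they satisfy the frame bounds
   with respect to ||T S f||^2. *)
Lemma frame_pullback {H V : Hilbert} (T : BOp H V) (Tadj : BOp V H) (S : BOp H H)
  (h : nat -> V) (J : nat -> bool) (a b : R) (f : H) :
  is_adjoint T Tadj -> positive_op S -> is_frame h J a b ->
  series_between (sum_in J (fun k => Cnorm2 (hinner f (S (Tadj (h k))))))
                 (a * norm2 (T (S f))) (b * norm2 (T (S f))).
Proof.
  intros hT hS [_ [_ hframe]].
  replace (fun k => Cnorm2 (hinner f (S (Tadj (h k)))))
    with (fun k => Cnorm2 (hinner (T (S f)) (h k))); [exact (hframe _) |].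
  apply functional_extensionality; intro k.
  rewrite <- (positive_op_selfadjoint S hS), <- hT; reflexivity.
Qed.

Section LocalEstimate.

Variables (H : Hilbert) (HL HO : nat -> Hilbert) (C C' S : BOp H H).
Variables (Lam : forall j, BOp H (HL j)) (Lamadj : forall j, BOp (HL j) H).
Variables (Om : forall j, BOp H (HO j)) (Omadj : forall j, BOp (HO j) H).
Hypothesis hLam : forall j, is_adjoint (Lam j) (Lamadj j).
Hypothesis hOm : forall j, is_adjoint (Om j) (Omadj j).
Hypothesis hSpos : positive_op S.
Hypothesis hSL : forall j f,
  hinner (Lam j (C f)) (Lam j (C' f)) = hinner (Lam j (S f)) (Lam j (S f)).
Hypothesis hSO : forall j f,
  hinner (Om j (C f)) (Om j (C' f)) = hinner (Om j (S f)) (Om j (S f)).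
Variables (fr : forall j, nat -> HL j) (I : nat -> nat -> bool).
Variables (gr : forall j, nat -> HO j) (Q : nat -> nat -> bool).
Variables (alpha beta alpha' beta' m M : R).
Hypothesis hfr : forall j, is_frame (fr j) (I j) alpha beta.
Hypothesis hgr : forall j, is_frame (gr j) (Q j) alpha' beta'.
Hypothesis m_le : m <= alpha /\ m <= alpha'.
Hypothesis M_ge : beta <= M /\ beta' <= M.

Definition woven_coeffs (sigma : nat -> bool) (f : H) (j : nat) : nat -> R :=
  if sigma j
  then sum_in (I j) (fun k => Cnorm2 (hinner f (S (Lamadj j (fr j k)))))
  else sum_in (Q j) (fun k => Cnorm2 (hinner f (S (Omadj j (gr j k))))).

(* The terms of the woven controlled series are squared norms. *)
Lemma weave_nonneg (sigma : nat -> bool) (f : H) (j : nat) :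
  0 <= weave Lam Om C C' sigma f j.
Proof. unfold weave; destruct (sigma j); [rewrite hSL | rewrite hSO]; apply hinner_pos. Qed.

Lemma woven_coeffs_bounds (sigma : nat -> bool) (f : H) (j : nat) :
  series_between (woven_coeffs sigma f j)
                 (m * weave Lam Om C C' sigma f j) (M * weave Lam Om C C' sigma f j).
Proof.
  pose proof (weave_nonneg sigma f j) as hw.
  unfold woven_coeffs, weave in *; destruct (sigma j).
  - rewrite hSL in *.
    apply (series_between_widen _ _ _ _ _
             (Rmult_le_compat_r _ _ _ hw (proj1 m_le))
             (Rmult_le_compat_r _ _ _ hw (proj1 M_ge))).
    exact (frame_pullback _ _ _ _ _ _ _ f (hLam j) hSpos (hfr j)).
  - rewrite hSO in *.
    apply (series_between_widen _ _ _ _ _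
             (Rmult_le_compat_r _ _ _ hw (proj2 m_le))
             (Rmult_le_compat_r _ _ _ hw (proj2 M_ge))).
    exact (frame_pullback _ _ _ _ _ _ _ f (hOm j) hSpos (hgr j)).
Qed.

End LocalEstimate.

Theorem mainTheorem4
  (H : Hilbert) (HL HO : nat -> Hilbert)
  (K Kadj : BOp H H) (hK : is_adjoint K Kadj)
  (C C' : BOp H H) (hC : GLplus C) (hC' : GLplus C')
  (Lam : forall j, BOp H (HL j)) (Lamadj : forall j, BOp (HL j) H)
  (hLam : forall j, is_adjoint (Lam j) (Lamadj j))
  (Om : forall j, BOp H (HO j)) (Omadj : forall j, BOp (HO j) H)
  (hOm : forall j, is_adjoint (Om j) (Omadj j))
  (* standing assumption: commutation *)
  (hCC' : forall x, C (C' x) = C' (C x))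
  (hCL : forall j x, C (Lamadj j (Lam j x)) = Lamadj j (Lam j (C x)))
  (hC'L : forall j x, C' (Lamadj j (Lam j x)) = Lamadj j (Lam j (C' x)))
  (hCO : forall j x, C (Omadj j (Om j x)) = Omadj j (Om j (C x)))
  (hC'O : forall j x, C' (Omadj j (Om j x)) = Omadj j (Om j (C' x)))
  (* S = (CC')^{1/2}: the positive square root of CC' *)
  (S : BOp H H) (hSpos : positive_op S) (hSS : forall x, S (S x) = C (C' x))
  (hSL : forall j f, hinner (Lam j (C f)) (Lam j (C' f)) = hinner (Lam j (S f)) (Lam j (S f)))
  (hSO : forall j f, hinner (Om j (C f)) (Om j (C' f)) = hinner (Om j (S f)) (Om j (S f)))
  (* Lambda and Omega are (C,C')-controlled K-g-frames *)
  (hLamF : ctrl_Kg_frame Kadj C C' Lam) (hOmF : ctrl_Kg_frame Kadj C C' Om)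
  (* local frames with uniform bounds *)
  (fr : forall j, nat -> HL j) (I : nat -> nat -> bool)
  (gr : forall j, nat -> HO j) (Q : nat -> nat -> bool)
  (alpha beta alpha' beta' : R)
  (hfr : forall j, is_frame (fr j) (I j) alpha beta)
  (hgr : forall j, is_frame (gr j) (Q j) alpha' beta') :
  ctrl_Kg_woven Kadj C C' Lam Om <->
  woven_K_frames Kadj S Lamadj Omadj fr I gr Q.
Proof.
  (* Uniform local constants; M also dominates alpha, alpha' so that m <= M. *)
  set (m := Rmin alpha alpha').
  set (M := Rmax (Rmax beta beta') (Rmax alpha alpha')).
  destruct (hfr 0%nat) as [ha _]; destruct (hgr 0%nat) as [ha' _].
  assert (m_le : m <= alpha /\ m <= alpha') by (split; [apply Rmin_l | apply Rmin_r]).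
  assert (M_ge : beta <= M /\ beta' <= M).
  { split; eapply Rle_trans; [apply Rmax_l | apply Rmax_l | apply Rmax_r | apply Rmax_l]. }
  assert (m_pos : 0 < m) by (unfold m, Rmin; destruct Rle_dec; lra).
  assert (m_le_M : m <= M)
    by (apply (Rle_trans _ alpha); [apply Rmin_l | eapply Rle_trans; [apply Rmax_l | apply Rmax_r]]).
  pose proof (woven_coeffs_bounds H HL HO C C' S Lam Lamadj Om Omadj hLam hOm hSpos
                hSL hSO fr I gr Q alpha beta alpha' beta' m M hfr hgr m_le M_ge) as local.
  pose proof (weave_nonneg H HL HO C C' S Lam Om hSL hSO) as w_nonneg.
  split.
  - intros [A [B [hA [hAB hW]]]].
    exists (m * A), (M * B); split; [nra | split; [nra |]].
    intros sigma f; rewrite Rmult_assoc, (Rmult_assoc M).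
    exact (outer_bounds_of_terms _ _ m M m_pos ltac:(lra) (w_nonneg sigma f)
             (local sigma f) _ _ (hW sigma f)).
  - intros [D1 [D2 [hD1 [hD12 hW]]]].
    assert (inv_le : / M <= / m) by (apply Rinv_le_contravar; lra).
    assert (inv_pos : 0 < / M) by (apply Rinv_0_lt_compat; lra).
    exists (/ M * D1), (/ m * D2); split; [nra | split; [nra |]].
    intros sigma f; destruct (hW sigma f) as [t [ht hb]].
    rewrite Rmult_assoc, (Rmult_assoc (/ m)).
    exact (terms_bounds_of_outer _ _ m M m_pos ltac:(lra) (w_nonneg sigma f)
             (local sigma f) t _ _ ht hb).
Qed.
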